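(* Let $A\in\mathbb{R}^{m\times n}$ be semi-monotone, let $A=P_1-R_1+S_1$ be a double proper weak regular splitting and $A=P_2-R_2+S_2$ a double proper regular splitting of $A$. Suppose $N(R_2)\supseteq N(P_2)$, $R(R_2)\subseteq R(P_2)$, $-1\notin\sigma(R_2P_1^{\dagger})$ and $\widehat{\mathcal{A}}^{\dagger}\geq 0$, where $\widehat{\mathcal{A}}=(I+R_2P_1^{\dagger})A$. If $P_2^{\dagger}R_2+P_2^{\dagger}S_2\leq 0$, then $\rho(\mathcal{W}_{12})\leq\rho(T_2)<1$, where $$\mathcal{W}_{12}=\begin{pmatrix} P_2^{\dagger}R_2P_1^{\dagger}R_1-P_2^{\dagger}S_2 & -P_2^{\dagger}R_2P_1^{\dagger}S_1\\ I & 0\end{pmatrix},\qquad T_2=\begin{pmatrix} P_2^{\dagger}R_2 & -P_2^{\dagger}S_2\\ I&0\end{pmatrix}.$$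
   Context: For $M\in\mathbb{R}^{m\times n}$, $M^{\dagger}$ is its Moore–Penrose inverse, $R(M)$, $N(M)$ its range and null space; inequalities are entrywise; $\rho$ is the spectral radius, $\sigma$ the spectrum. $A$ is semi-monotone if $A^{\dagger}\geq0$. A double splitting $A=P-R+S$ is a double proper splitting if $R(P)=R(A)$ and $N(P)=N(A)$; it is double proper regular if moreover $P^{\dagger}\geq0$, $R\geq0$, $S\leq0$; double proper weak regular if moreover $P^{\dagger}\geq 0$, $P^{\dagger}R\geq 0$, $P^{\dagger}S\leq 0$. *)

From HB Require Import structures.
From mathcomp Require Import all_boot all_order all_algebra.
From mathcomp Require Import classical_sets reals.
From mathcomp Require Import complex.
Set Implicit Arguments. Unset Strict Implicit. Unset Printing Implicit Defensive.
Import Order.TTheory GRing.Theory Num.Theory.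
Local Open Scope ring_scope.
Local Open Scope classical_set_scope.
Local Open Scope complex_scope.

Section Defs.
Variable R : realType.

Definition mx_ge0 m n (M : 'M[R]_(m, n)) : Prop := forall i j, 0 <= M i j.
Definition mx_le0 m n (M : 'M[R]_(m, n)) : Prop := forall i j, M i j <= 0.

Definition is_MP_inverse m n (M : 'M[R]_(m, n)) (X : 'M[R]_(n, m)) : Prop :=
  [/\ M *m X *m M = M, X *m M *m X = X,
      (M *m X)^T = M *m X & (X *m M)^T = X *m M].

Definition colspace m n (M : 'M[R]_(m, n)) : set 'cV[R]_m :=
  [set y | exists x : 'cV[R]_n, y = M *m x].
Definition nullspace m n (M : 'M[R]_(m, n)) : set 'cV[R]_n :=
  [set x | M *m x = 0].

Definition semi_monotone m n (M : 'M[R]_(m, n)) (Md : 'M[R]_(n, m)) : Prop :=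
  is_MP_inverse M Md /\ mx_ge0 Md.

Definition double_proper_splitting m n (A P Q S : 'M[R]_(m, n)) : Prop :=
  [/\ A = P - Q + S, colspace P = colspace A & nullspace P = nullspace A].

Definition double_proper_regular m n (A P Q S : 'M[R]_(m, n))
    (Pd : 'M[R]_(n, m)) : Prop :=
  [/\ double_proper_splitting A P Q S, is_MP_inverse P Pd,
      mx_ge0 Pd, mx_ge0 Q & mx_le0 S].

Definition double_proper_weak_regular m n (A P Q S : 'M[R]_(m, n))
    (Pd : 'M[R]_(n, m)) : Prop :=
  [/\ double_proper_splitting A P Q S, is_MP_inverse P Pd,
      mx_ge0 Pd, mx_ge0 (Pd *m Q) & mx_le0 (Pd *m S)].

Definition spectrum n (M : 'M[R]_n) : set R[i] :=
  [set z | eigenvalue (map_mx (fun x : R => x%:C) M) z].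
Definition spectral_radius n (M : 'M[R]_n) : R :=
  sup [set ComplexField.Normc.normc z | z in spectrum M].

End Defs.

From mathcomp Require Import all_boot all_order all_algebra.
From mathcomp Require Import classical_sets reals.
From mathcomp Require Import complex perm.
From mathcomp Require Import ring lra.
Import Order.TTheory GRing.Theory Num.Theory.
Local Open Scope ring_scope.
Local Open Scope classical_set_scope.

(* With B = P2^+ R2, C = -P2^+ S2, D = P1^+ R1 and E = -P1^+ S1, all nonnegative, T2 and W12
   are the companion matrices [B C; I 0] and [BD+C BE; I 0].  A companion matrix [B' C'; I 0]
   with nonnegative blocks has spectral radius at most a as soon as some u >= 0 satisfies
   a^2 u >= a B' u + C' u, with B' and C' vanishing on the rows where u does.
   For T2, u = A^+ 1 works with some a < 1, since (B + C) u = u - P2^+ 1.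
   For rho(T2) < a <= 1, aI - T2 is inverse-positive, so some u >= 0 satisfies
   a^2 u - a B u - C u = P2^+ (A^+)^T 1.  Multiplying by P2 gives A u >= 0, and then
   B P1^+ A = B - BD - BE together with B <= C makes u a test vector for W12 at a.
   Inverse-positivity of aI - M for M >= 0 and rho(M) < a holds for large a by a row-sum
   argument and descends to a in steps of uniform size, the resolvent being bounded. *)

Set Implicit Arguments.
Unset Strict Implicit.
Unset Printing Implicit Defensive.

Lemma row0_mulmx (R : pzSemiRingType) m n p (X : 'M[R]_(m, n)) (Y : 'M[R]_(n, p)) i :
  (forall k, X i k = 0) -> forall j, (X *m Y) i j = 0.
Proof. by move=> X0 j; rewrite mxE big1 // => k _; rewrite X0 mul0r. Qed.

Lemma col0_mulmx (R : pzSemiRingType) m n p (X : 'M[R]_(m, n)) (Y : 'M[R]_(n, p)) j :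
  (forall k, Y k j = 0) -> forall i, (X *m Y) i j = 0.
Proof. by move=> Y0 i; rewrite mxE big1 // => k _; rewrite Y0 mulr0. Qed.

Lemma mx_ext_cV (R : pzRingType) m n (X Y : 'M[R]_(m, n)) :
  (forall x : 'cV_n, X *m x = Y *m x) -> X = Y.
Proof.
move=> XY; apply/matrixP => i j.
by have := congr1 (fun v : 'cV_m => v i 0) (XY (delta_mx j 0)); rewrite -!colE !mxE.
Qed.

Lemma real_downward_induction (R : archiFieldType) (P : R -> Prop) (a t0 d : R) :
  0 < d -> (forall t, t0 <= t -> P t) ->
  (forall t s, a <= s -> s <= t <= t0 -> t - d <= s -> P t -> P s) ->
  forall s, a <= s -> P s.
Proof.
move=> d0 base step.
suff ind k s : a <= s -> t0 - k%:R * d <= s -> P s.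
  move=> s as_; apply: (ind (Num.bound (`|t0 - a| / d))) => //.
  have := archi_boundP (divr_ge0 (normr_ge0 (t0 - a)) (ltW d0)).
  rewrite ltr_pdivrMr // => /(le_lt_trans (ler_norm _)) lt_t0a.
  by apply: le_trans as_; rewrite lerBlDr -lerBlDl ltW.
elim: k s => [|k IH] s as_ hs; first by apply: base; rewrite mul0r subr0 in hs.
have [le_ts|lt_st] := lerP (t0 - k%:R * d) s; first exact: IH.
have kd0 : 0 <= k%:R * d by rewrite mulr_ge0 // ltW.
apply: (step (t0 - k%:R * d)) => //.
- by rewrite (ltW lt_st) lerBlDr lerDl.
- by rewrite -natr1 mulrDl mul1r opprD addrA in hs.
- by apply: IH => //; apply: le_trans (ltW lt_st).
Qed.

Lemma ler_of_forall_gt_le1 (R : realFieldType) (x r : R) :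
  r < 1 -> (forall a, r < a -> a <= 1 -> x <= a) -> x <= r.
Proof.
move=> r1 xr; apply/ler_addgt0Pr => e e0.
apply: le_trans (xr (Order.min (r + e) 1) _ _) _; rewrite ?ge_min ?lexx ?orbT //.
by rewrite lt_min r1 ltrDl e0.
Qed.

Lemma det_norm_le (R : numDomainType) n (X : 'M[R]_n) b :
  (forall i j, `|X i j| <= b) -> `|\det X| <= n`!%:R * b ^+ n.
Proof.
move=> Xb; apply: le_trans (ler_norm_sum _ _ _) _.
rewrite -card_Sn; apply: le_trans (_ : \sum_(s : 'S_n) b ^+ n <= _).
  apply: ler_sum => s _; rewrite normrM normrX normrN1 expr1n !mul1r normr_prod.
  rewrite -[n in b ^+ n]card_ord -prodr_const; apply: ler_prod => i _.
  by rewrite normr_ge0 Xb.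
by rewrite sumr_const mulr_natl.
Qed.

Lemma invmx_norm_le (R : numFieldType) n (X : 'M[R]_n) b c :
  0 < c -> c <= `|\det X| -> (forall i j, `|X i j| <= b) ->
  forall i j, `|invmx X i j| <= n.-1`!%:R * b ^+ n.-1 / c.
Proof.
move=> c0 cX Xb i j; have X_gt0 := lt_le_trans c0 cX.
rewrite /invmx unitmxE unitfE -normr_gt0 X_gt0 !mxE /cofactor mulrC normrM normfV.
rewrite normrM normrX normrN1 expr1n mul1r; apply: ler_pM => //.
- by rewrite invr_ge0.
- by apply: det_norm_le => k l; rewrite !mxE.
- by rewrite lef_pV2.
Qed.

Lemma eigenvalue_companion (F : fieldType) n (B D : 'M[F]_n) z :
  eigenvalue (block_mx B D 1%:M 0 : 'M_(n + n)) z ->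
  exists2 p : 'rV_n, p != 0 & p *m (z *: B + D) = z ^+ 2 *: p.
Proof.
case/eigenvalueP => v; rewrite -[v]hsubmxK mul_row_block mulmx1 mulmx0 addr0 scale_row_mx.
case/eq_row_mx; set p := lsubmx v; set q := rsubmx v => pBq pD vnz.
exists p.
  apply: contraNneq vnz => p0.
  by move: pBq; rewrite p0 mul0mx add0r scaler0 => ->; rewrite row_mx0.
by rewrite mulmxDr -scalemxAr pD -scalerDr pBq scalerA -expr2.
Qed.

Lemma companion_left_eigen_weight_le (C : numClosedFieldType) n (B D : 'M[C]_n)
    (u : 'cV[C]_n) (z : C) (p : 'rV[C]_n) :
  (forall i j, 0 <= B i j) -> (forall i j, 0 <= D i j) -> (forall i, 0 <= u i 0) ->
  p *m (z *: B + D) = z ^+ 2 *: p ->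
  `|z| ^+ 2 * \sum_i `|p 0 i| * u i 0 <=
    \sum_i `|p 0 i| * (`|z| * (B *m u) i 0 + (D *m u) i 0).
Proof.
move=> B0 D0 u0 p_eig.
have exchange : \sum_j \sum_i `|p 0 i| * (`|z| * B i j + D i j) * u j 0 =
    \sum_i `|p 0 i| * (`|z| * (B *m u) i 0 + (D *m u) i 0).
  rewrite exchange_big; apply: eq_bigr => i _.
  rewrite !mxE mulr_sumr -big_split mulr_sumr; apply: eq_bigr => j _ /=; ring.
rewrite -exchange mulr_sumr; apply: ler_sum => j _; rewrite mulrA -normrX -normrM.
have -> : z ^+ 2 * p 0 j = \sum_i p 0 i * (z * B i j + D i j).
  by move/matrixP: p_eig => /(_ 0 j); rewrite !mxE => <-; apply: eq_bigr => i _; rewrite !mxE.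
rewrite -mulr_suml ler_wpM2r //; apply: le_trans (ler_norm_sum _ _ _) _.
apply: ler_sum => i _; rewrite normrM ler_wpM2l // (le_trans (ler_normD _ _)) //.
by rewrite normrM (ger0_norm (B0 i j)) (ger0_norm (D0 i j)).
Qed.

Lemma companion_left_eigen_norm_le (C : numClosedFieldType) n (B D : 'M[C]_n)
    (u : 'cV[C]_n) (a z : C) (p : 'rV[C]_n) :
  (forall i j, 0 <= B i j) -> (forall i j, 0 <= D i j) -> (forall i, 0 <= u i 0) ->
  0 < a -> (forall i, a * (B *m u) i 0 + (D *m u) i 0 <= a ^+ 2 * u i 0) ->
  (forall i, u i 0 = 0 -> forall j, B i j = 0 /\ D i j = 0) ->
  p != 0 -> p *m (z *: B + D) = z ^+ 2 *: p -> `|z| <= a.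
Proof.
move=> B0 D0 u0 a0 Bu supp p_neq0 p_eig.
rewrite real_leNgt ?normr_real ?gtr0_real //; apply/negP => lt_az.
have z_gt0 : 0 < `|z| := lt_trans a0 lt_az.
(* The weight [s] of [|p|] against [u] satisfies [|z|^2 s <= |z| a s], so [s = 0]; by the
   support condition every term of [z^2 p = p (z B + D)] then vanishes. *)
pose s := \sum_i `|p 0 i| * u i 0.
have s_ge0 : 0 <= s by apply: sumr_ge0 => i _; rewrite mulr_ge0.
have Bu_le i : `|z| * (B *m u) i 0 + (D *m u) i 0 <= `|z| * a * u i 0.
  have Du_ge0 : 0 <= (D *m u) i 0 by rewrite mxE sumr_ge0 // => j _; rewrite mulr_ge0.
  apply: (@le_trans _ _ (`|z| / a * (a * (B *m u) i 0 + (D *m u) i 0))).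
    rewrite mulrDr mulrA divfK ?gt_eqF // lerD2l ler_peMl //.
    by rewrite ler_pdivlMr // mul1r ltW.
  have -> : `|z| * a * u i 0 = `|z| / a * (a ^+ 2 * u i 0) by field; rewrite gt_eqF.
  by apply: ler_wpM2l (Bu i); rewrite divr_ge0 ?ltW.
have s_le : `|z| ^+ 2 * s <= `|z| * a * s.
  apply: le_trans (companion_left_eigen_weight_le B0 D0 u0 p_eig) _.
  by rewrite mulr_sumr; apply: ler_sum => i _; rewrite mulrCA ler_wpM2l.
have s_eq0 : s = 0.
  apply/eqP; rewrite eq_le s_ge0 andbT.
  rewrite -(ler_pM2l (_ : 0 < `|z| * (`|z| - a))) ?mulr0; last by rewrite mulr_gt0 ?subr_gt0.
  by rewrite mulrBr -expr2 mulrBl subr_le0.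
suff p_eq0 : p = 0 by rewrite p_eq0 eqxx in p_neq0.
have z2_neq0 : z ^+ 2 != 0 by rewrite expf_eq0 /= -normr_eq0 gt_eqF.
apply/rowP => j; rewrite mxE; apply: (mulfI z2_neq0).
move/matrixP: p_eig => /(_ 0 j); rewrite !mxE mulr0 => <-; rewrite big1 // => i _.
have /eqP := @psumr_eq0P _ _ _ _ (fun i _ => mulr_ge0 (normr_ge0 (p 0 i)) (u0 i)) s_eq0 i isT.
rewrite !mxE mulf_eq0 normr_eq0 => /orP[/eqP->|/eqP /supp/(_ j)[-> ->]]; first by rewrite mul0r.
by rewrite mulr0 addr0 mulr0.
Qed.

Section NonnegativeMatrices.
Variable R : realType.

Lemma mulmx_ge0 m n p (X : 'M[R]_(m, n)) (Y : 'M[R]_(n, p)) :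
  mx_ge0 X -> mx_ge0 Y -> mx_ge0 (X *m Y).
Proof. by move=> X0 Y0 i j; rewrite mxE; apply: sumr_ge0 => k _; apply: mulr_ge0. Qed.

Lemma addmx_ge0 m n (X Y : 'M[R]_(m, n)) : mx_ge0 X -> mx_ge0 Y -> mx_ge0 (X + Y).
Proof. by move=> X0 Y0 i j; rewrite mxE addr_ge0. Qed.

Lemma scalemx_ge0 m n c (X : 'M[R]_(m, n)) : 0 <= c -> mx_ge0 X -> mx_ge0 (c *: X).
Proof. by move=> c0 X0 i j; rewrite mxE mulr_ge0. Qed.

Lemma oppmx_ge0 m n (X : 'M[R]_(m, n)) : mx_le0 X -> mx_ge0 (- X).
Proof. by move=> X0 i j; rewrite mxE oppr_ge0. Qed.

Lemma trmx_ge0 m n (X : 'M[R]_(m, n)) : mx_ge0 X -> mx_ge0 X^T.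
Proof. by move=> X0 i j; rewrite mxE. Qed.

Lemma const_mx_ge0 m n (c : R) : 0 <= c -> mx_ge0 (const_mx c : 'M[R]_(m, n)).
Proof. by move=> c0 i j; rewrite mxE. Qed.

Lemma companion_mx_ge0 n (B D : 'M[R]_n) :
  mx_ge0 B -> mx_ge0 D -> mx_ge0 (block_mx B D 1%:M 0 : 'M_(n + n)).
Proof.
move=> B0 D0 i j; rewrite -(splitK i) -(splitK j).
by case: (split i) => i'; case: (split j) => j';
  rewrite ?block_mxEul ?block_mxEur ?block_mxEdl ?block_mxEdr ?mxE.
Qed.

Lemma mulmx_ge0_eq0 m n p (X : 'M[R]_(m, n)) (Y : 'M[R]_(n, p)) i j :
  mx_ge0 X -> mx_ge0 Y -> (X *m Y) i j = 0 -> forall k, X i k = 0 \/ Y k j = 0.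
Proof.
move=> X0 Y0; rewrite mxE => /psumr_eq0P XY0 k.
have /eqP := XY0 (fun k _ => mulr_ge0 (X0 i k) (Y0 k j)) k isT.
by rewrite mulf_eq0 => /orP[/eqP|/eqP]; [left|right].
Qed.

Lemma exists_scaled_le n (z q : 'cV[R]_n) :
  mx_ge0 z -> mx_ge0 q -> (forall i, 0 < z i 0 -> 0 < q i 0) ->
  exists2 eps, 0 < eps <= 1 & forall i, eps * z i 0 <= q i 0.
Proof.
move=> z0 q0 zq; pose eps := \big[Order.min/1]_(i | 0 < z i 0) (q i 0 / z i 0).
exists eps.
  by rewrite bigmin_le_id andbT; apply: lt_bigmin => // i /[dup] /zq; apply: divr_gt0.
move=> i; have [zi_gt0|] := ltP 0 (z i 0).
  by rewrite -ler_pdivlMr // (bigmin_le_cond _ (fun i => q i 0 / z i 0)).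
by move=> zi_le0; rewrite [z i 0](@le_anti _ _ _ 0) ?zi_le0 ?z0 // mulr0.
Qed.

End NonnegativeMatrices.

Section SpectralRadius.
Variable R : realType.
Local Open Scope complex_scope.

Lemma normC_normc (z : R[i]) : `|z| = (ComplexField.Normc.normc z)%:C.
Proof. by case: z. Qed.

Lemma normC_real (x : R) : `|x%:C| = `|x|%:C.
Proof. by rewrite normC_normc /= expr0n /= addr0 sqrtr_sqr. Qed.

Lemma normc_ge0 (z : R[i]) : 0 <= ComplexField.Normc.normc z.
Proof. by case: z => a b; rewrite sqrtr_ge0. Qed.

Lemma spectrum_char_roots n (M : 'M[R]_n) :
  exists rs : seq R[i], (forall z, spectrum M z <-> z \in rs) /\
    forall t, (\det (t%:M - M))%:C = \prod_(z <- rs) (t%:C - z).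
Proof.
pose Mc := map_mx (fun x : R => x%:C) M.
have [rs Mc_rs] := closed_field_poly_normal (char_poly Mc).
rewrite (monicP (char_poly_monic Mc)) scale1r in Mc_rs.
exists rs; split=> [z|t].
  by rewrite /spectrum /= eigenvalue_root_char Mc_rs root_prod_XsubC.
have -> : \prod_(z <- rs) (t%:C - z) = (char_poly Mc).[t%:C].
  by rewrite Mc_rs horner_prod; apply: eq_bigr => z _; rewrite hornerXsubC.
rewrite -det_map_mx -horner_evalE -det_map_mx /char_poly_mx !map_mxB /=.
rewrite !map_scalar_mx /= horner_evalE hornerX; congr (\det (_ - _)).
by apply/matrixP => i j; rewrite !mxE horner_evalE hornerC.
Qed.

Lemma spectral_radius_ub n (M : 'M[R]_n) z :
  spectrum M z -> ComplexField.Normc.normc z <= spectral_radius M.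
Proof.
move=> Mz; apply: ub_le_sup; last by exists z.
have [rs [M_rs _]] := spectrum_char_roots M.
exists (\big[Order.max/0]_(w <- rs) ComplexField.Normc.normc w) => _ [w /M_rs w_rs <-].
exact: le_bigmax_seq.
Qed.

Lemma spectral_radius_le n (M : 'M[R]_n) b : 0 <= b ->
  (forall z, spectrum M z -> ComplexField.Normc.normc z <= b) -> spectral_radius M <= b.
Proof.
move=> b0 Mb; rewrite /spectral_radius.
have [->|/set0P ne] := eqVneq [set ComplexField.Normc.normc z | z in spectrum M] set0.
  by rewrite sup0.
by apply: ge_sup ne _ => _ [z Mz <-]; exact: Mb.
Qed.

Lemma spectral_radius_ge0 n (M : 'M[R]_n) : 0 <= spectral_radius M.
Proof.
rewrite /spectral_radius.
have [->|/set0P[_ [z Mz _]]] := eqVneq [set ComplexField.Normc.normc z | z in spectrum M] set0.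
  by rewrite sup0.
exact: le_trans (normc_ge0 z) (spectral_radius_ub Mz).
Qed.

Lemma det_sub_lower_bound n (M : 'M[R]_n) a : spectral_radius M < a ->
  exists2 c, 0 < c & forall t, a <= t -> c <= `|\det (t%:M - M)|.
Proof.
move=> Ma; have [rs [M_rs det_rs]] := spectrum_char_roots M.
have rs_lt z : z \in rs -> ComplexField.Normc.normc z < a.
  by move=> /M_rs Mz; apply: le_lt_trans (spectral_radius_ub Mz) Ma.
exists (\prod_(z <- rs) (a - ComplexField.Normc.normc z)).
  by rewrite big_seq; apply: prodr_gt0 => z /rs_lt; rewrite subr_gt0.
move=> t at_; rewrite -lecR -normC_real det_rs normr_prod rmorph_prod /= !big_seq.
apply: ler_prod => z /rs_lt lt_za; rewrite lecR subr_ge0 (ltW lt_za) /=.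
have t0 : 0 <= t by apply: le_trans (normc_ge0 z) (ltW (lt_le_trans lt_za at_)).
apply: le_trans (lerB_dist _ _); rewrite normC_real normC_normc -rmorphB lecR ger0_norm //.
by rewrite lerB.
Qed.

End SpectralRadius.

Definition mx_monotone (R : realType) n (X : 'M[R]_n) :=
  forall x : 'cV_n, mx_ge0 (X *m x) -> mx_ge0 x.

Section MonotoneMatrices.
Variable R : realType.

Lemma row_sum_monotone n (L : 'M[R]_n) k :
  mx_ge0 L -> (forall i, \sum_j L i j < k) -> mx_monotone (k%:M - L).
Proof.
move=> L0 Lk x Lx i j; rewrite (ord1 j) {j}.
have [i0 _ x_min] := @arg_minP _ _ _ i xpredT (fun i => x i 0) isT.
apply: le_trans (x_min i isT); rewrite leNgt; apply/negP => x_neg.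
have := Lx i0 0; rewrite mulmxBl mul_scalar_mx !mxE subr_ge0.
have Lx_ge : (\sum_j L i0 j) * x i0 0 <= \sum_j L i0 j * x j 0.
  by rewrite mulr_suml; apply: ler_sum => j _; rewrite ler_wpM2l ?x_min.
have := Lk i0; rewrite -(ltr_nM2r x_neg); lra.
Qed.

Lemma monotone_invmx_ge0 n (X : 'M[R]_n) :
  X \in unitmx -> mx_monotone X -> mx_ge0 (invmx X).
Proof.
move=> Xu Xm i j; have := Xm (col j (invmx X)).
rewrite colE mulmxA mulmxV // mul1mx -colE => /(_ _ i 0); rewrite mxE; apply=> k l.
by rewrite !mxE; case: eqP; case: eqP.
Qed.

Lemma monotone_subr_scalar n (X : 'M[R]_n) h :
  X \in unitmx -> mx_monotone X -> 0 <= h ->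
  (forall i, h * \sum_j invmx X i j < 1) -> mx_monotone (X - h%:M).
Proof.
move=> Xu Xm h0 small x Xhx.
have iX0 := monotone_invmx_ge0 Xu Xm.
have iXX : invmx X *m (X - h%:M) = 1%:M - h *: invmx X.
  by rewrite mulmxBr mulVmx // mul_mx_scalar.
apply: (@row_sum_monotone _ (h *: invmx X)).
- by move=> i j; rewrite mxE mulr_ge0.
- by move=> i; under eq_bigr do rewrite mxE; rewrite -mulr_sumr.
- by rewrite -iXX -mulmxA; apply: mulmx_ge0.
Qed.

End MonotoneMatrices.

Section MMatrices.
Variables (R : realType) (n : nat) (M : 'M[R]_n).

Lemma monotone_sub_large : mx_ge0 M ->
  exists t0, forall t, t0 <= t -> mx_monotone (t%:M - M).
Proof.
move=> M0; exists (1 + \big[Order.max/0]_i \sum_j M i j) => t t0t.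
apply: row_sum_monotone => // i; apply: lt_le_trans t0t.
by rewrite ltr_pwDl // le_bigmax.
Qed.

Lemma unitmx_sub a : spectral_radius M < a -> forall t, a <= t -> (t%:M - M) \in unitmx.
Proof.
move=> Ma t at_; have [c c0 /(_ t at_) c_det] := det_sub_lower_bound Ma.
by rewrite unitmxE unitfE -normr_gt0 (lt_le_trans c0 c_det).
Qed.

Lemma resolvent_bounded a t0 : spectral_radius M < a ->
  exists2 K, 0 <= K & forall t, a <= t <= t0 ->
    forall i j, `|invmx (t%:M - M) i j| <= K.
Proof.
move=> Ma; have [c c0 c_det] := det_sub_lower_bound Ma.
pose b := `|a| + `|t0| + \big[Order.max/0]_(k : 'I_n * 'I_n) `|M k.1 k.2|.
have b0 : 0 <= b by rewrite !addr_ge0 ?bigmax_ge_id.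
exists (n.-1`!%:R * b ^+ n.-1 / c) => [|t /andP[at_ tt0] i j].
  by rewrite divr_ge0 ?mulr_ge0 ?exprn_ge0 // ltW.
apply: (invmx_norm_le (b := b) c0 (c_det t at_)) => k l; rewrite !mxE.
apply: le_trans (ler_normB _ _) _; rewrite /b lerD //.
  have t_le : `|t| <= `|a| + `|t0|.
    have := ler_norm t0; have := lerNnormlW (lexx `|a|).
    have := normr_ge0 a; have := normr_ge0 t0.
    by rewrite ler_norml; lra.
  by case: eqP => _; rewrite ?mulr1n ?mulr0n ?normr0 ?addr_ge0.
exact: (le_bigmax _ (fun k : 'I_n * 'I_n => `|M k.1 k.2|) (k, l)).
Qed.

Lemma monotone_sub_spectral_radius a : mx_ge0 M -> spectral_radius M < a ->
  (a%:M - M) \in unitmx /\ mx_monotone (a%:M - M).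
Proof.
move=> M0 Ma; have unit_t := unitmx_sub Ma.
split; first exact: unit_t.
have [t0 large] := monotone_sub_large M0.
have [K K0 invK] := resolvent_bounded t0 Ma.
have nK0 : 0 <= n%:R * K by rewrite mulr_ge0.
(* A step [h <= d] keeps the row sums of [h * invmx (t%:M - M)] below 1. *)
pose d := (n%:R * K + 1)^-1.
apply: (@real_downward_induction _ (fun s => mx_monotone (s%:M - M)) a t0 d) => //.
  by rewrite invr_gt0 ltr_wpDl.
move=> t s as_ /andP[st tt0] tds Mt.
have -> : s%:M - M = (t%:M - M) - (t - s)%:M.
  by apply/matrixP => i j; rewrite !mxE; case: eqP => _; rewrite ?mulr1n ?mulr0n; lra.
have at_ := le_trans as_ st.
apply: monotone_subr_scalar => //; [exact: unit_t | by rewrite subr_ge0 | move=> i].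
have inv0 := monotone_invmx_ge0 (unit_t t at_) Mt.
apply: (@le_lt_trans _ _ (d * (n%:R * K))).
  apply: ler_pM; rewrite ?subr_ge0 ?sumr_ge0 //; first by rewrite lerBlDr -lerBlDl.
  apply: (@le_trans _ _ (\sum_(j < n) K)); last by rewrite sumr_const card_ord mulr_natl.
  by apply: ler_sum => j _; apply: le_trans (ler_norm _) (invK t _ i j); rewrite at_.
by rewrite mulrC ltr_pdivrMr ?mul1r ?ltrDl // ltr_wpDl.
Qed.

End MMatrices.

Section CompanionMatrices.
Variables (R : realType) (n : nat) (B D : 'M[R]_n).
Hypotheses (B_ge0 : mx_ge0 B) (D_ge0 : mx_ge0 D).

Local Notation T := (block_mx B D 1%:M 0 : 'M[R]_(n + n)).

Lemma spectral_radius_companion_le (u : 'cV[R]_n) a :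
  mx_ge0 u -> 0 < a -> mx_ge0 (a ^+ 2 *: u - a *: (B *m u) - D *m u) ->
  (forall i, u i 0 = 0 -> forall j, B i j = 0 /\ D i j = 0) ->
  spectral_radius T <= a.
Proof.
move=> u0 a0 Tu supp; apply: spectral_radius_le (ltW a0) _ => z.
rewrite /spectrum /= map_block_mx map_mx1 map_mx0 => /eigenvalue_companion[p p_neq0 p_eig].
rewrite -lecR -normC_normc.
apply: (companion_left_eigen_norm_le (u := map_mx (real_complex R) u) _ _ _ _ _ _ p_neq0 p_eig).
- by move=> i j; rewrite mxE lecR.
- by move=> i j; rewrite mxE lecR.
- by move=> i; rewrite mxE lecR.
- by rewrite ltcR.
- move=> i; rewrite -!map_mxM !mxE -!rmorphXn -!rmorphM -rmorphD lecR.
  by have := Tu i 0; rewrite !mxE; lra.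
- move=> i; rewrite mxE => /eqP; rewrite fmorph_eq0 => /eqP /supp ui j.
  by rewrite !mxE; have [-> ->] := ui j.
Qed.

Lemma companion_resolvent_ge0 a (f : 'cV[R]_n) :
  spectral_radius T < a -> mx_ge0 f ->
  exists2 u, mx_ge0 u & a ^+ 2 *: u - a *: (B *m u) - D *m u = f.
Proof.
move=> Ta f0.
have [T_unit T_mono] := monotone_sub_spectral_radius (companion_mx_ge0 B_ge0 D_ge0) Ta.
pose y := invmx (a%:M - T) *m col_mx f 0.
have y0 : mx_ge0 y.
  apply: T_mono; rewrite mulKVmx // => i j; rewrite -(splitK i).
  by case: (split i) => i' /=; rewrite ?col_mxEu ?col_mxEd ?mxE.
have : (a%:M - T) *m y = col_mx f 0 by rewrite mulKVmx.
rewrite -[y]vsubmxK mulmxBl mul_scalar_mx mul_block_col mul1mx mul0mx addr0.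
rewrite scale_col_mx opp_col_mx add_col_mx => /eq_col_mx[Ty f_eq].
exists (dsubmx y); first by move=> i j; rewrite mxE.
move/eqP: f_eq; rewrite subr_eq0 => /eqP y_usub.
by rewrite -Ty -y_usub scalerA -expr2 scalemxAr opprD addrA.
Qed.

End CompanionMatrices.

Section MoorePenrose.
Variables (R : realType) (m n : nat).
Implicit Types (M P : 'M[R]_(m, n)) (Md Pd : 'M[R]_(n, m)).

Lemma MP_colspace_proj p M Pd (X : 'M[R]_(m, p)) :
  is_MP_inverse M Pd -> colspace X `<=` colspace M -> M *m Pd *m X = X.
Proof.
move=> [MPM _ _ _] XM; apply: mx_ext_cV => x.
have [y Xx] : colspace M (X *m x) by apply: XM; exists x.
by rewrite -[M *m Pd *m X *m x]mulmxA Xx mulmxA MPM.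
Qed.

Lemma MP_nullspace_proj p M Pd (X : 'M[R]_(p, n)) :
  is_MP_inverse M Pd -> nullspace M `<=` nullspace X -> X *m Pd *m M = X.
Proof.
move=> [MPM _ _ _] MX; apply: mx_ext_cV => x; apply/eqP; rewrite eq_sym -subr_eq0.
have : nullspace X (x - Pd *m M *m x) by apply: MX; rewrite /nullspace /= mulmxBr !mulmxA MPM subrr.
by rewrite /nullspace /= mulmxBr !mulmxA => ->.
Qed.

Lemma MP_nullspace_sub M Md P Pd :
  is_MP_inverse M Md -> is_MP_inverse P Pd -> nullspace P `<=` nullspace M ->
  Pd *m P *m Md = Md.
Proof.
move=> hM hP PM; have MPdP := MP_nullspace_proj hP PM.
case: hM => _ MdMMd _ MdM_sym; case: hP => _ _ _ PdP_sym.
have Md_eq : Md = M^T *m Md^T *m Md by rewrite -trmx_mul MdM_sym MdMMd.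
by rewrite Md_eq !mulmxA -PdP_sym -trmx_mul mulmxA MPdP.
Qed.

Lemma MP_colspace_sub M Md P Pd :
  is_MP_inverse M Md -> is_MP_inverse P Pd -> colspace P `<=` colspace M ->
  Pd *m M *m Md = Pd.
Proof.
move=> hM hP PM; have MMdP := MP_colspace_proj hM PM.
case: hM => _ _ MMd_sym _; case: hP => _ PdPPd PPd_sym _.
have Pd_eq : Pd = Pd *m Pd^T *m P^T by rewrite -mulmxA -trmx_mul PPd_sym mulmxA PdPPd.
by rewrite {1}Pd_eq -!mulmxA -MMd_sym -trmx_mul MMdP mulmxA -Pd_eq.
Qed.

Lemma MP_row0 M Md P Pd i :
  is_MP_inverse M Md -> is_MP_inverse P Pd -> nullspace M `<=` nullspace P ->
  (forall j, Md i j = 0) -> forall j, Pd i j = 0.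
Proof.
move=> hM hP MP Md_i j; rewrite -(MP_nullspace_sub hP hM MP) -mulmxA.
exact: row0_mulmx.
Qed.

Lemma MP_col0 M Md P Pd j :
  is_MP_inverse M Md -> is_MP_inverse P Pd -> colspace P `<=` colspace M ->
  (forall i, Md i j = 0) -> forall i, Pd i j = 0.
Proof. by move=> hM hP PM Md_j i; rewrite -(MP_colspace_sub hM hP PM); exact: col0_mulmx. Qed.

End MoorePenrose.

Section DoubleSplittings.
Variables (R : realType) (m n : nat).
Variables (A P1 R1 S1 P2 R2 S2 : 'M[R]_(m, n)) (Ad P1d P2d : 'M[R]_(n, m)).
Hypothesis A_semi_monotone : semi_monotone A Ad.
Hypothesis split2 : double_proper_regular A P2 R2 S2 P2d.

Local Notation B := (P2d *m R2).
Local Notation C := (- (P2d *m S2)).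
Local Notation T2 := (block_mx B C 1%:M 0 : 'M[R]_(n + n)).
Local Notation one := (const_mx 1 : 'cV[R]_m).

Lemma T2_blocks_ge0 : mx_ge0 B /\ mx_ge0 C.
Proof.
have [_ _ P2d0 R20 S20] := split2.
by split; [exact: mulmx_ge0 | rewrite -mulmxN; apply: mulmx_ge0 => //; exact: oppmx_ge0].
Qed.

Lemma P2d_row0_of_Ad i : (Ad *m one) i 0 = 0 -> forall j, P2d i j = 0.
Proof.
have [[hA Ad0] [[_ _ P2A] hP2 _ _ _]] := (A_semi_monotone, split2).
move/(mulmx_ge0_eq0 Ad0 (const_mx_ge0 ler01)) => Ad_i.
apply: MP_row0 hA hP2 _ _; first by rewrite P2A.
by move=> k; case: (Ad_i k) => //; rewrite mxE => /eqP; rewrite oner_eq0.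
Qed.

Lemma Ad_row0_of_P2d i : (P2d *m one) i 0 = 0 -> forall j, Ad i j = 0.
Proof.
have [[hA _] [[_ _ P2A] hP2 P2d0 _ _]] := (A_semi_monotone, split2).
move/(mulmx_ge0_eq0 P2d0 (const_mx_ge0 ler01)) => P2d_i.
apply: MP_row0 hP2 hA _ _; first by rewrite P2A.
by move=> k; case: (P2d_i k) => //; rewrite mxE => /eqP; rewrite oner_eq0.
Qed.

Lemma addBC_mulmx_Ad : (B + C) *m Ad = Ad - P2d.
Proof.
have [[hA _] [[A_eq P2A_col P2A_null] hP2 _ _ _]] := (A_semi_monotone, split2).
have -> : B + C = P2d *m (P2 - A).
  by rewrite -mulmxBr A_eq; congr (_ *m _); apply/matrixP => i j; rewrite !mxE; ring.
rewrite mulmxBr mulmxBl (MP_nullspace_sub hA hP2) ?P2A_null //.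
by rewrite (MP_colspace_sub hA hP2) ?P2A_col.
Qed.

Lemma spectral_radius_T2_lt1 : spectral_radius T2 < 1.
Proof.
have [B0 C0] := T2_blocks_ge0; have [[_ Ad0] [_ _ P2d0 _ _]] := (A_semi_monotone, split2).
pose z := Ad *m one; pose q := P2d *m one.
have z0 : mx_ge0 z by apply: mulmx_ge0 (const_mx_ge0 ler01).
have q0 : mx_ge0 q by apply: mulmx_ge0 (const_mx_ge0 ler01).
have supp i : z i 0 = 0 -> forall j, B i j = 0 /\ C i j = 0.
  by move/P2d_row0_of_Ad => P2d_i j; rewrite [C i j]mxE !(row0_mulmx _ P2d_i) oppr0.
have pos i : 0 < z i 0 -> 0 < q i 0.
  move=> z_i; rewrite lt_def q0 andbT; apply: contraTneq z_i => /Ad_row0_of_P2d Ad_i.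
  by rewrite /z row0_mulmx ?ltxx.
have [eps /andP[eps0 eps1] eps_le] := exists_scaled_le z0 q0 pos.
(* With [g := 1 - eps / 2]: [g^2 z - g B z - C z = (q - eps z) + (eps / 2)^2 z + (1 - g) B z]. *)
pose g := 1 - eps / 2.
apply: (@le_lt_trans _ _ g); last by rewrite /g; lra.
apply: (spectral_radius_companion_le (a := g) B0 C0 z0 _ _ supp); first by rewrite /g; lra.
have BCz : B *m z + C *m z = z - q by rewrite -mulmxDl /z /q !mulmxA addBC_mulmx_Ad mulmxBl.
move=> i j; rewrite (ord1 j); have := eps_le i; have := z0 i 0; have := mulmx_ge0 B0 z0 i 0.
move/matrixP: BCz => /(_ i 0); move: (B *m z) (C *m z) => Bz Cz; rewrite !mxE /g => BCz_i.
have := mulr_ge0 (mulr_ge0 (ltW eps0) (ltW eps0)) (z0 i 0); nra.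
Qed.

Hypothesis split1 : double_proper_weak_regular A P1 R1 S1 P1d.
Hypothesis R2_nullspace : nullspace P2 `<=` nullspace R2.
Hypothesis R2_colspace : colspace R2 `<=` colspace P2.
Hypothesis B_le_C : mx_le0 (P2d *m R2 + P2d *m S2).

Local Notation D := (P1d *m R1).
Local Notation E := (- (P1d *m S1)).
Local Notation W12 := (block_mx (B *m D + C) (B *m E) 1%:M 0 : 'M[R]_(n + n)).
Local Notation w := (Ad^T *m (const_mx 1 : 'cV[R]_n)).

Lemma w_ge0 : mx_ge0 w.
Proof.
have [_ Ad0] := A_semi_monotone.
exact: mulmx_ge0 (trmx_ge0 Ad0) (const_mx_ge0 ler01).
Qed.

Local Notation test a u := (a ^+ 2 *: u - a *: (B *m u) - C *m u = P2d *m w).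

Lemma P2_mulmx_test a u : test a u ->
  a ^+ 2 *: (P2 *m u) - a *: (R2 *m u) + S2 *m u = w.
Proof.
have [[hA _] [[A_eq P2A_col _] hP2 _ _ _]] := (A_semi_monotone, split2).
have P2_A : P2 *m P2d *m A = A by apply: MP_colspace_proj hP2 _; rewrite P2A_col.
have P2_R2 : P2 *m P2d *m R2 = R2 by apply: MP_colspace_proj.
have P2_S2 : P2 *m P2d *m S2 = S2.
  have S2_eq : S2 = A - P2 + R2 by rewrite A_eq; apply/matrixP => i j; rewrite !mxE; ring.
  by have [P2P2dP2 _ _ _] := hP2; rewrite {1}S2_eq !mulmxDr mulmxN P2_A P2_R2 P2P2dP2 -S2_eq.
have P2_w : P2 *m P2d *m w = w.
  have [_ AdAAd AAd_sym _] := hA.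
  have -> : Ad^T = A *m Ad *m Ad^T by rewrite -AAd_sym -trmx_mul mulmxA AdAAd.
  by rewrite !mulmxA P2_A.
move=> tst; rewrite -P2_w -mulmxA -tst !mulmxBr !scalemxAr !mulmxA.
by rewrite P2_R2 mulmxN mulNmx mulmxA P2_S2 opprK.
Qed.

Lemma A_mul_test_ge0 a u : 0 < a <= 1 -> mx_ge0 u -> test a u -> mx_ge0 (A *m u).
Proof.
have [[A_eq _ _] _ _ R20 S20] := split2.
move=> /andP[a0 a1] u0 /P2_mulmx_test Pw i j.
have R2u := mulmx_ge0 R20 u0 i j.
have S2u : (S2 *m u) i j <= 0.
  by have := mulmx_ge0 (oppmx_ge0 S20) u0 i j; rewrite mulNmx mxE oppr_ge0.
have Au_eq : a ^+ 2 * (A *m u) i j =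
    w i j + (1 - a) * (a * (R2 *m u) i j - (1 + a) * (S2 *m u) i j).
  rewrite -Pw A_eq !mulmxDl mulNmx.
  by move: (P2 *m u) (R2 *m u) (S2 *m u) => X Y Z; rewrite !mxE; ring.
have w_ij := w_ge0 i j.
have : 0 <= a ^+ 2 * (A *m u) i j.
  rewrite Au_eq addr_ge0 // mulr_ge0 ?subr_ge0 //; nra.
by rewrite pmulr_rge0 // exprn_gt0.
Qed.

Lemma P2d_row0_of_test a u i : 0 <= a -> mx_ge0 u -> test a u -> u i 0 = 0 ->
  forall j, P2d i j = 0.
Proof.
have [B0 C0] := T2_blocks_ge0.
have [[hA Ad0] [[_ P2A_col _] hP2 P2d0 _ _]] := (A_semi_monotone, split2).
move=> a0 u0 tst ui.
have f_i : (P2d *m w) i 0 = 0.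
  apply/le_anti; rewrite (mulmx_ge0 P2d0 w_ge0) andbT -tst.
  have := mulmx_ge0 B0 u0 i 0; have := mulmx_ge0 C0 u0 i 0.
  by move: (B *m u) (C *m u) => Bu Cu; rewrite !mxE ui; nra.
move=> j; have [//|w_j] := mulmx_ge0_eq0 P2d0 w_ge0 f_i j.
apply: (MP_col0 hA hP2 _ _ i); first by rewrite P2A_col.
move=> k; have [|] := mulmx_ge0_eq0 (trmx_ge0 Ad0) (const_mx_ge0 ler01) w_j k; rewrite mxE //.
by move/eqP; rewrite oner_eq0.
Qed.

Lemma B_mul_P1d_A : B *m P1d *m A = B - B *m D - B *m E.
Proof.
have [[A1_eq _ P1A_null] hP1 _ _ _] := split1; have [[_ _ P2A_null] _ _ _ _] := split2.
have R2_P1 : R2 *m P1d *m P1 = R2.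
  by apply: MP_nullspace_proj hP1 _; rewrite P1A_null -P2A_null.
rewrite {1}A1_eq !mulmxDr -!mulmxA (mulmxA R2) R2_P1.
by rewrite !mulmxN !mulmxA opprK.
Qed.

Lemma W12_test_ge0 a u : 0 < a <= 1 -> mx_ge0 u -> test a u ->
  mx_ge0 (a ^+ 2 *: u - a *: ((B *m D + C) *m u) - (B *m E) *m u).
Proof.
have [B0 _] := T2_blocks_ge0; have [_ _ P1d0 D0 _] := split1.
move=> a_01 u0 tst; have Au0 := A_mul_test_ge0 a_01 u0 tst.
have CB0 : mx_ge0 (C - B) by move=> i j; have := B_le_C i j; rewrite !mxE; lra.
have W12_eq : a ^+ 2 *: u - a *: ((B *m D + C) *m u) - (B *m E) *m u =
    P2d *m w + (1 - a) *: ((C - B) *m u + B *m (D *m u)) + B *m (P1d *m (A *m u)).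
  have BP1dAu : B *m (P1d *m (A *m u)) = B *m u - B *m (D *m u) - B *m (E *m u).
    by rewrite !mulmxA B_mul_P1d_A !mulmxBl !mulmxA.
  rewrite mulmxDl -!(mulmxA B) -tst BP1dAu [(C - B) *m u]mulmxBl.
  move: (B *m u) (C *m u) (B *m (D *m u)) (B *m (E *m u)) => X Y Z V.
  by apply/matrixP => i j; rewrite !mxE; ring.
have [_ [_ _ P2d0 _ _]] := (A_semi_monotone, split2).
move: a_01 => /andP[_ a1]; rewrite W12_eq.
apply: addmx_ge0; first apply: addmx_ge0.
- exact: mulmx_ge0 P2d0 w_ge0.
- apply: scalemx_ge0; first by rewrite subr_ge0.
  by apply: addmx_ge0; apply: mulmx_ge0 => //; apply: mulmx_ge0.
- exact: mulmx_ge0 B0 (mulmx_ge0 P1d0 Au0).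
Qed.

Lemma spectral_radius_W12_le a : spectral_radius T2 < a -> a <= 1 ->
  spectral_radius W12 <= a.
Proof.
have [B0 C0] := T2_blocks_ge0; have [_ _ _ D0 E0] := split1.
have [_ [_ _ P2d0 _ _]] := (A_semi_monotone, split2).
move=> T2a a1; have a0 := le_lt_trans (spectral_radius_ge0 _) T2a.
have [u u0 tst] := companion_resolvent_ge0 B0 C0 T2a (mulmx_ge0 P2d0 w_ge0).
apply: (spectral_radius_companion_le (u := u) _ _ u0 a0).
- by apply: addmx_ge0 => //; apply: mulmx_ge0.
- by apply: mulmx_ge0 => //; apply: oppmx_ge0.
- by apply: W12_test_ge0 u0 tst; rewrite a0 a1.
move=> i /(P2d_row0_of_test (ltW a0) u0 tst) P2d_i j.
split; last exact: row0_mulmx _ (row0_mulmx _ P2d_i) j.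
rewrite [X in X = 0]mxE [X in _ + X]mxE (row0_mulmx _ (row0_mulmx _ P2d_i)).
by rewrite (row0_mulmx _ P2d_i) oppr0 addr0.
Qed.

End DoubleSplittings.

Theorem theorem3p15 (R : realType) (m n : nat)
    (A P1 R1 S1 P2 R2 S2 : 'M[R]_(m, n))
    (Ad P1d P2d Ahatd : 'M[R]_(n, m)) :
  semi_monotone A Ad ->
  double_proper_weak_regular A P1 R1 S1 P1d ->
  double_proper_regular A P2 R2 S2 P2d ->
  nullspace P2 `<=` nullspace R2 ->
  colspace R2 `<=` colspace P2 ->
  ~ spectrum (R2 *m P1d) (-1) ->
  semi_monotone ((1%:M + R2 *m P1d) *m A) Ahatd ->
  mx_le0 (P2d *m R2 + P2d *m S2) ->
  spectral_radius
    (block_mx (P2d *m R2 *m P1d *m R1 - P2d *m S2) (- (P2d *m R2 *m P1d *m S1))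
              1%:M 0 : 'M[R]_(n + n))
  <= spectral_radius
    (block_mx (P2d *m R2) (- (P2d *m S2)) 1%:M 0 : 'M[R]_(n + n))
  /\ spectral_radius
    (block_mx (P2d *m R2) (- (P2d *m S2)) 1%:M 0 : 'M[R]_(n + n)) < 1.
Proof.
move=> hA split1 split2 R2_null R2_col _ _ B_le_C.
have T2_lt1 := spectral_radius_T2_lt1 hA split2.
split; last exact: T2_lt1.
rewrite -[P2d *m R2 *m P1d *m R1]mulmxA -[P2d *m R2 *m P1d *m S1]mulmxA.
rewrite -[- (P2d *m R2 *m _)]mulmxN.
apply: (ler_of_forall_gt_le1 T2_lt1) => a T2_a a1.
exact: (spectral_radius_W12_le hA split2 split1 R2_null R2_col B_le_C T2_a a1).
Qed.
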